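(* Assume $n\ge 3t+1$. In any execution of COOL, if $\eta^{[2]}=2$ then $\eta^{[1]}=2$.
   Context: Setting. $n$ processors indexed by $[1:n]$, pairwise joined by reliable private synchronous channels; recipients know senders. At most $t$ processors are dishonest, controlled by an adversary who may make them deviate arbitrarily (missing values replaced by a fixed default); the others are honest. Processor $i$ holds an $\ell$-bit initial message $\boldsymbol w_i$. $\phi$ is a default value different from every $\ell$-bit message. Logarithms are base 2. Code. $k=\lfloor t/5\rfloor+1$, $c=\lceil \max\{\ell,(t/5+1)\log(n+1)\}/k\rceil$. Messages are zero-padded to $kc$ bits and viewed in $GF(2^c)^k$. Integers in $[1:n]$ are identified with distinct nonzero elements of $GF(2^c)$; $\boldsymbol h_i\in GF(2^c)^k$ has entries $h_{i,j}=\prod_{p\in[1:k],\,p\ne j}\frac{i-p}{j-p}$ (field arithmetic). COOL, Phases 1–2 (honest processor $i$). Initialization: updated message $\boldsymbol w^{(i)}:=\boldsymbol w_i$, $y^{(i)}_j:=\boldsymbol h_j^{\mathsf T}\boldsymbol w_i$, $u_i(i):=1$. Phase 1. (a) Send $(y^{(i)}_j,y^{(i)}_i)$ to each $j\ne i$. (b) For $j\ne i$, link indicator $u_i(j):=1$ if the pair received from $j$ equals $(y^{(i)}_i,y^{(i)}_j)$, else $0$. Success indicator $s_i:=1$ if $\sum_{j=1}^n u_i(j)\ge n-t$; otherwise $s_i:=0$ and $\boldsymbol w^{(i)}:=\phi$. (c) Send $s_i$ to all; each processor records the indicator received from each $j$ (own for itself) and forms $\mathcal S_1=\{j:s_j=1\}$,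 $\mathcal S_0=\{j:s_j=0\}$ (views may differ between processors). Phase 2. If $s_i=1$: set $u_i(j):=0$ for all $j\in\mathcal S_0$; if now $\sum_j u_i(j)<n-t$, set $s_i:=0$, $\boldsymbol w^{(i)}:=\phi$ and send $s_i=0$ to all. Everyone overwrites recorded indicators with newly received ones and recomputes $\mathcal S_0,\mathcal S_1$. Notation. For $p\in\{1,2\}$, $s^{[p]}_i$ is the value of honest processor $i$'s success indicator at the end of Phase $p$, and $\eta^{[p]}$ is the number of distinct values in $\{\boldsymbol w_i: i\text{ honest},\ s^{[p]}_i=1\}$ (initial messages). *)

From mathcomp Require Import all_boot all_order all_algebra.
Set Implicit Arguments. Unset Strict Implicit. Unset Printing Implicit Defensive.
Import GRing.Theory.
Local Open Scope ring_scope.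

Definition cool_k (t : nat) : nat := (t %/ 5 + 1)%N.

(* c = ceil( max{ l, (t/5 + 1) log2(n+1) } / k ), characterised exactly as the
   least natural c with  k c >= l  and  k c >= ((t+5)/5) log2(n+1),
   the latter being equivalent to  (n+1)^(t+5) <= 2^(5 k c). *)
Definition cool_c_ok (n t l c : nat) : bool :=
  (l <= cool_k t * c)%N && ((n.+1) ^ (t + 5) <= 2 ^ (5 * (cool_k t * c)))%N.

Definition is_cool_c (n t l c : nat) : Prop :=
  cool_c_ok n t l c /\ forall c', cool_c_ok n t l c' -> (c <= c')%N.

(* Processors are 'I_n (0-based: index m stands for processor m+1).
   alpha m is the nonzero field element identified with the integer m+1.
   enc encodes an l-bit message (zero-padded) as a vector of GF(2^c)^k. *)
Section COOL.
Variables (F : fieldType) (n t l : nat) (alpha : nat -> F)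
  (enc : l.-tuple bool -> 'rV[F]_(cool_k t))
  (D : {set 'I_n})
  (w : 'I_n -> l.-tuple bool)
  (adv1 : 'I_n -> 'I_n -> F * F)        (* adv1 j i : pair sent by dishonest j to i in Phase 1(a) *)
  (adv2 : 'I_n -> 'I_n -> bool).        (* adv2 j i : indicator sent by dishonest j to i in Phase 1(c) *)

Local Notation k := (cool_k t).

Definition cool_h (i : nat) (j : 'I_k) : F :=
  \prod_(p < k | p != j) ((alpha i - alpha p) / (alpha j - alpha p)).

Definition cool_y (i j : 'I_n) : F :=
  \sum_(jj < k) cool_h j jj * enc (w i) 0 jj.

Definition honest (i : 'I_n) : bool := i \notin D.

(* Pair received by i from j in Phase 1(a). *)
Definition msg1 (i j : 'I_n) : F * F :=
  if honest j then (cool_y j i, cool_y j j) else adv1 j i.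

(* Link indicator u_i(j) after Phase 1(b). *)
Definition u1 (i j : 'I_n) : bool :=
  (j == i) || (msg1 i j == (cool_y i i, cool_y i j)).

Definition s1 (i : 'I_n) : bool := (n - t <= #|[set j | u1 i j]|)%N.

(* Indicator of j as recorded by i after Phase 1(c) (own for j = i). *)
Definition ind1 (i j : 'I_n) : bool := if honest j then s1 j else adv2 j i.

(* s^{[2]}_i : after zeroing u_i(j) for j in S_0 (i's view). *)
Definition s2 (i : 'I_n) : bool :=
  s1 i && (n - t <= #|[set j | u1 i j && ind1 i j]|)%N.

Definition eta (s : 'I_n -> bool) : nat :=
  #|[set w i | i in [set i | honest i && s i]]|.

End COOL.

From mathcomp Require Import all_boot all_order all_algebra.
From mathcomp Require Import zify.
Set Implicit Arguments. Unset Strict Implicit. Unset Printing Implicit Defensive.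
Import GRing.Theory.
Local Open Scope ring_scope.

(* The symbols y^{(i)}_j are the evaluations at the points alpha j of a
   polynomial of degree < k (a Reed-Solomon code), so processors holding
   different messages agree on fewer than k symbols.  An honest processor j
   linked to both a and b agrees with each of them on its own symbol, so the
   honest neighbourhoods of two successful honest processors with different
   messages meet in fewer than k points.  Each such neighbourhood has at
   least n - t - |D| elements inside the n - |D| honest processors; for three
   of them, inclusion-exclusion gives 2n <= 3t + 2|D| + 3(k - 1) < 6t + 2,
   contradicting n >= 3t + 1.  Hence eta^[1] <= 2, while eta^[2] <= eta^[1]
   because s^[2]_i = 1 implies s^[1]_i = 1. *)

Section ReedSolomon.

Variables (F : fieldType) (t : nat) (alpha : nat -> F).

Local Notation k := (cool_k t).

Definition rs_eval (v : 'rV[F]_k) (x : nat) : F :=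
  \sum_(jj < k) cool_h alpha x jj * v 0 jj.

Lemma rs_evalB (u v : 'rV[F]_k) (x : nat) :
  rs_eval (u - v) x = rs_eval u x - rs_eval v x.
Proof.
by rewrite /rs_eval -sumrB; apply: eq_bigr => jj _; rewrite !mxE mulrBr.
Qed.

Definition rs_poly (v : 'rV[F]_k) : {poly F} :=
  \sum_(jj < k) (v 0 jj * \prod_(q < k | q != jj) (alpha jj - alpha q)^-1)
                  *: \prod_(q < k | q != jj) ('X - (alpha q)%:P).

Lemma horner_rs_poly (v : 'rV[F]_k) (x : nat) :
  (rs_poly v).[alpha x] = rs_eval v x.
Proof.
rewrite horner_sum; apply: eq_bigr => jj _.
rewrite hornerZ horner_prod; under eq_bigr do rewrite hornerXsubC.
rewrite /cool_h [RHS]mulrC -mulrA; congr (_ * _).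
by rewrite -big_split /=; apply: eq_bigr => q _; rewrite mulrC.
Qed.

Lemma size_rs_poly (v : 'rV[F]_k) : (size (rs_poly v) <= k)%N.
Proof.
apply: (big_ind (fun p : {poly F} => size p <= k)%N).
- by rewrite size_poly0.
- by move=> p q Hp Hq; apply: leq_trans (size_polyD _ _) _; rewrite geq_max Hp Hq.
move=> jj _; apply: leq_trans (size_scale_leq _ _) _.
rewrite (eq_bigl (mem (predC1 jj))) // -big_enum size_prod_XsubC -cardE.
by rewrite cardC1 card_ord /cool_k addn1.
Qed.

Section Interpolation.

Hypothesis alpha_inj : {in [pred m : nat | (m < k)%N] &, injective alpha}.

Lemma cool_h_ord (p jj : 'I_k) : cool_h alpha p jj = (p == jj)%:R.
Proof.
have alpha_neq (q r : 'I_k) : q != r -> alpha q != alpha r.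
  by apply: contra => /eqP E; apply/eqP/val_inj/(alpha_inj _ _ E); rewrite inE.
rewrite /cool_h; case: (eqVneq p jj) => [->|pjj].
  by apply: big1 => q qjj; rewrite divff // subr_eq0 alpha_neq // eq_sym.
by rewrite (bigD1 p pjj) /= subrr !mul0r.
Qed.

Lemma rs_eval_ord (v : 'rV[F]_k) (jj : 'I_k) : rs_eval v jj = v 0 jj.
Proof.
rewrite /rs_eval (bigD1 jj) //= cool_h_ord eqxx mul1r big1 ?addr0 // => q qjj.
by rewrite cool_h_ord eq_sym (negPf qjj) mul0r.
Qed.

Lemma rs_poly_neq0 (v : 'rV[F]_k) : v != 0 -> rs_poly v != 0.
Proof.
apply: contra => /eqP v0; apply/eqP/rowP => jj.
by rewrite mxE -rs_eval_ord -horner_rs_poly v0 horner0.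
Qed.

End Interpolation.

Lemma card_rs_eval_roots (n : nat) (v : 'rV[F]_k) :
  {in [pred m : nat | (m < n)%N] &, injective alpha} -> v != 0 ->
  (#|[set j : 'I_n | rs_eval v j == 0%R]| < k)%N.
Proof.
move=> alpha_inj v_neq0; case: (leqP k n) => [kn | nk]; last first.
  by apply: leq_ltn_trans (max_card _) _; rewrite card_ord.
have alpha_inj_k : {in [pred m : nat | (m < k)%N] &, injective alpha}.
  by apply: sub_in2 alpha_inj => m; rewrite !inE => /leq_trans; apply.
set Z := [set j : 'I_n | _].
have := max_poly_roots (rs_poly_neq0 alpha_inj_k v_neq0)
  (rs := [seq alpha (val j) | j <- enum Z]).
rewrite size_map -cardE => roots_bound.
apply: leq_trans (roots_bound _ _) (size_rs_poly v).
  apply/allP => x /mapP [j]; rewrite mem_enum inE => /eqP vj0 ->.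
  by rewrite /root horner_rs_poly vj0.
rewrite (map_inj_in_uniq (f := fun j : 'I_n => alpha (val j))) ?enum_uniq //.
by move=> x y _ _ Exy; apply: val_inj; apply: (alpha_inj _ _ _ _ Exy); rewrite inE /=.
Qed.

Lemma card_rs_eval_agree (n : nat) (u v : 'rV[F]_k) :
  {in [pred m : nat | (m < n)%N] &, injective alpha} -> u != v ->
  (#|[set j : 'I_n | rs_eval u j == rs_eval v j]| < k)%N.
Proof.
move=> alpha_inj uv; rewrite -subr_eq0 in uv.
apply: leq_ltn_trans (card_rs_eval_roots alpha_inj uv).
by apply/subset_leq_card/subsetP => j; rewrite !inE rs_evalB subr_eq0.
Qed.

End ReedSolomon.

Lemma cards3_leq_setU_setI (T : finType) (A B C : {set T}) :
  (#|A| + #|B| + #|C| <=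
     #|A :|: B :|: C| + #|A :&: B| + #|B :&: C| + #|C :&: A|)%N.
Proof.
have UIab := cardsUI A B.
have UIabc := cardsUI (A :|: B) C.
have UIcacb := cardsUI (C :&: A) (B :&: C).
have : (#|(A :|: B) :&: C| <= #|C :&: A| + #|B :&: C|)%N.
  by rewrite setIUl [A :&: C]setIC -UIcacb leq_addr.
lia.
Qed.

Lemma card_subsetC (T : finType) (A D : {set T}) :
  A \subset ~: D -> (#|A| + #|D| <= #|T|)%N.
Proof. by move=> /subset_leq_card; rewrite -(cardsC D) addnC leq_add2l. Qed.

Lemma eta_mono (n l : nat) (D : {set 'I_n}) (w : 'I_n -> l.-tuple bool)
  (s s' : 'I_n -> bool) :
  (forall i, s i -> s' i) -> (eta D w s <= eta D w s')%N.
Proof.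
move=> ss'; apply/subset_leq_card/imsetS/subsetP => i.
by rewrite !inE => /andP [-> /ss' ->].
Qed.

Section Phase1.

Variables (F : fieldType) (n t l : nat) (alpha : nat -> F)
  (enc : l.-tuple bool -> 'rV[F]_(cool_k t)) (D : {set 'I_n})
  (w : 'I_n -> l.-tuple bool) (adv1 : 'I_n -> 'I_n -> F * F).

Local Notation u1 := (u1 alpha enc D w adv1).
Local Notation s1 := (s1 alpha enc D w adv1).
Local Notation cool_y := (cool_y alpha enc w).

Definition honest_links (a : 'I_n) : {set 'I_n} := [set j | honest D j && u1 a j].

Lemma u1_honest_symbol (a j : 'I_n) :
  honest D j -> u1 a j -> cool_y a j = cool_y j j.
Proof.
by rewrite /u1 /msg1 => ->; case: (eqVneq j a) => [-> // | _] /= /eqP [_ ->].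
Qed.

Lemma u1_honest_agree (a b j : 'I_n) :
  honest D j -> u1 a j -> u1 b j -> cool_y a j = cool_y b j.
Proof.
by move=> hj /(u1_honest_symbol hj) -> /(u1_honest_symbol hj) ->.
Qed.

Lemma card_honest_links (a : 'I_n) :
  s1 a -> (n - t <= #|honest_links a| + #|D|)%N.
Proof.
move=> /leq_trans; apply; apply: leq_trans (leq_card_setU _ _).
apply/subset_leq_card/subsetP => j; rewrite !inE /honest => ->.
by case: (j \in D).
Qed.

Lemma card_honest_links_inter (a b : 'I_n) :
  {in [pred m : nat | (m < n)%N] &, injective alpha} ->
  enc (w a) != enc (w b) ->
  (#|honest_links a :&: honest_links b| < cool_k t)%N.
Proof.
move=> alpha_inj ab; apply: leq_ltn_trans (card_rs_eval_agree alpha_inj ab).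
apply/subset_leq_card/subsetP => j; rewrite !inE.
by case/andP=> /andP [hj uaj] /andP [_ ubj]; apply/eqP/(u1_honest_agree hj uaj ubj).
Qed.

Lemma no_three_distinct_successes (a b c : 'I_n) :
  (3 * t + 1 <= n)%N ->
  {in [pred m : nat | (m < n)%N] &, injective alpha} ->
  (#|D| <= t)%N ->
  s1 a -> s1 b -> s1 c ->
  enc (w a) != enc (w b) -> enc (w b) != enc (w c) -> enc (w c) != enc (w a) ->
  False.
Proof.
move=> Hn alpha_inj HD sa sb sc ab bc ca.
have links_honest x : honest_links x \subset ~: D.
  by apply/subsetP => j; rewrite !inE => /andP [].
have /card_subsetC : honest_links a :|: honest_links b :|: honest_links c \subset ~: D.
  by rewrite !subUset !links_honest.
rewrite card_ord.
have := cards3_leq_setU_setI (honest_links a) (honest_links b) (honest_links c).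
have := card_honest_links_inter alpha_inj ab.
have := card_honest_links_inter alpha_inj bc.
have := card_honest_links_inter alpha_inj ca.
have := card_honest_links sa; have := card_honest_links sb.
have := card_honest_links sc; have := leq_divM t 5.
rewrite /cool_k; lia.
Qed.

Lemma eta_s1_leq2 :
  (3 * t + 1 <= n)%N ->
  {in [pred m : nat | (m < n)%N] &, injective alpha} ->
  injective enc -> (#|D| <= t)%N ->
  (eta D w s1 <= 2)%N.
Proof.
move=> Hn alpha_inj enc_inj HD; rewrite leqNgt.
apply/card_gt2P => [[_ [_ [_ [[/imsetP [a] + -> /imsetP [b] + -> /imsetP [c] + ->]]]]]].
rewrite !inE => /andP [_ sa] /andP [_ sb] /andP [_ sc].
rewrite -!(inj_eq enc_inj) => -[ab bc ca].
exact: (no_three_distinct_successes Hn alpha_inj HD sa sb sc ab bc ca).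
Qed.

End Phase1.

Lemma s2_s1 (F : fieldType) (n t l : nat) (alpha : nat -> F)
  (enc : l.-tuple bool -> 'rV[F]_(cool_k t)) (D : {set 'I_n})
  (w : 'I_n -> l.-tuple bool) (adv1 : 'I_n -> 'I_n -> F * F)
  (adv2 : 'I_n -> 'I_n -> bool) (i : 'I_n) :
  s2 alpha enc D w adv1 adv2 i -> s1 alpha enc D w adv1 i.
Proof. by case/andP. Qed.

Theorem lemma13 (n t l c : nat) (F : finFieldType) (alpha : nat -> F)
  (enc : l.-tuple bool -> 'rV[F]_(cool_k t))
  (D : {set 'I_n}) (w : 'I_n -> l.-tuple bool)
  (adv1 : 'I_n -> 'I_n -> F * F) (adv2 : 'I_n -> 'I_n -> bool) :
  (3 * t + 1 <= n)%N ->
  is_cool_c n t l c ->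
  #|F| = (2 ^ c)%N ->
  {in [pred m : nat | (m < n)%N] &, injective alpha} ->
  (forall m : nat, (m < n)%N -> alpha m != 0) ->
  injective enc ->
  (#|D| <= t)%N ->
  eta D w (s2 alpha enc D w adv1 adv2) = 2%N ->
  eta D w (s1 alpha enc D w adv1) = 2%N.
Proof.
move=> Hn _ _ alpha_inj _ enc_inj HD eta2.
apply/eqP; rewrite eqn_leq eta_s1_leq2 //= -eta2.
exact/eta_mono/s2_s1.
Qed.
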